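(* Let $A\in\mathcal X$ be such that there exist linearly independent $v_1,\dots,v_n\in\mathbb Z^n$ with $\mathcal S_1(A)=\{\pm v_1,\dots,\pm v_n\}$, let $B$ be the matrix with columns $v_1,\dots,v_n$, and define $g_2:\mathbb R^{n-1}\to S_n$ by $g_2(x)=A\,B\,D(x)\,B^{-1}$, where for $x=(a_1,\dots,a_{n-1})$, $D(x)=\mathrm{diag}(e^{a_1},\dots,e^{a_{n-1}},e^{-a_1-\dots-a_{n-1}})$. Then there is $\epsilon>0$ such that for all $x$ with $|x|<\epsilon$: $g_2(x)\in\mathcal X$ if and only if $x=0$; and if moreover $x\neq0$ and $v\in\mathcal S_1(g_2(x))$, then $\lim_{t\to\infty}l_v(g_2(tx))=0$.
   Context: $S_n=\mathrm{SO}_n\backslash\mathrm{SL}_n\mathbb R$; a point is represented by a matrix up to left $\mathrm{SO}_n$ (here $A$ denotes a representative in $\mathrm{SL}_n\mathbb R$; $ABD(x)B^{-1}\in\mathrm{SL}_n\mathbb R$). For $v\in\mathbb R^n$, $l_v(A)=|Av|$. $\mathrm{syst}_1(A)=\min_{v\in\mathbb Z^n\setminus\{0\}}|Av|$, $\mathcal S_1(A)=\{v\in\mathbb Z^n:|Av|=\mathrm{syst}_1(A)\}$; $A$ is well-rounded if $\mathcal S_1(A)$ spans $\mathbb R^n$, and $\mathcal X$ is the set of well-rounded points. *)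

From Stdlib Require Import Reals Lra ZArith Arith List.
Open Scope R_scope.

(* Matrices and vectors are represented as functions on indices; only
   indices < n are meaningful for n x n matrices / vectors of R^n. *)
Definition Vec := nat -> R.
Definition Mat := nat -> nat -> R.
Definition ZVec := nat -> Z.

Fixpoint sumR (n : nat) (f : nat -> R) : R :=
  match n with
  | O => 0
  | S m => sumR m f + f m
  end.

Definition mat_vec (n : nat) (A : Mat) (v : Vec) : Vec :=
  fun i => sumR n (fun j => A i j * v j).

Definition mmul (n : nat) (A B : Mat) : Mat :=
  fun i k => sumR n (fun j => A i j * B j k).

Definition vnorm (n : nat) (v : Vec) : R := sqrt (sumR n (fun i => v i ^ 2)).

Definition minor (i j : nat) (A : Mat) : Mat :=
  fun r c => A (if (r <? i)%nat then r else S r) (if (c <? j)%nat then c else S c).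

Fixpoint det (n : nat) (A : Mat) : R :=
  match n with
  | O => 1
  | S m => sumR (S m) (fun j => (-1) ^ j * A 0%nat j * det m (minor 0 j A))
  end.

Definition cofactor (n : nat) (A : Mat) (i j : nat) : R :=
  (-1) ^ (i + j) * det (n - 1) (minor i j A).

Definition inv (n : nat) (A : Mat) : Mat :=
  fun i j => / det n A * cofactor n A j i.

Definition toR (w : ZVec) : Vec := fun i => IZR (w i).

Definition lv (n : nat) (A : Mat) (w : ZVec) : R := vnorm n (mat_vec n A (toR w)).

Definition nonzeroZ (n : nat) (w : ZVec) : Prop :=
  exists i, (i < n)%nat /\ w i <> 0%Z.

Definition in_S1 (n : nat) (A : Mat) (w : ZVec) : Prop :=
  nonzeroZ n w /\ forall u : ZVec, nonzeroZ n u -> lv n A w <= lv n A u.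

(* A is well-rounded: S_1(A) spans R^n (every vector is a finite
   real linear combination of elements of S_1(A)). *)
Definition well_rounded (n : nat) (A : Mat) : Prop :=
  forall y : Vec, exists l : list (R * ZVec),
    Forall (fun p => in_S1 n A (snd p)) l /\
    forall i, (i < n)%nat ->
      y i = fold_right (fun p acc => fst p * IZR (snd p i) + acc) 0 l.

Definition colmat (v : nat -> ZVec) : Mat := fun i k => IZR (v k i).

Definition lin_indep (n : nat) (v : nat -> ZVec) : Prop :=
  forall c : nat -> R,
    (forall i, (i < n)%nat -> sumR n (fun k => c k * IZR (v k i)) = 0) ->
    forall k, (k < n)%nat -> c k = 0.

Definition zeqv (n : nat) (w u : ZVec) : Prop := forall i, (i < n)%nat -> w i = u i.
Definition zopp (u : ZVec) : ZVec := fun i => (- u i)%Z.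

Definition Dmat (n : nat) (x : Vec) : Mat :=
  fun i j => if (i =? j)%nat then
               (if (i <? n - 1)%nat then exp (x i) else exp (- sumR (n - 1) x))
             else 0.

Definition g2 (n : nat) (A : Mat) (v : nat -> ZVec) (x : Vec) : Mat :=
  mmul n (mmul n (mmul n A (colmat v)) (Dmat n x)) (inv n (colmat v)).

Definition vscale (t : R) (x : Vec) : Vec := fun i => t * x i.

(* Write W = A B and let c(u) = B^{-1} u be the coordinates of u in the basis
   v_1, ..., v_n of minimal vectors of A.  Then g_2(x) u = W D(x) c(u), so the
   basis vectors are simply rescaled, l_{v_k}(g_2(x)) = e^{d_k(x)} lam, where
   lam = syst_1(A) and d_k(x) are the diagonal exponents of D(x) (they sum to 0).

   1. We identify the concrete matrices of the statement (Laplace determinant,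
      adjugate inverse) with MathComp matrices; this gives the formula above.
   2. Discreteness: only finitely many integer vectors have |A u| <= lam + 1, so
      the vectors other than +-v_k have length >= lam2 for some lam2 > lam.
   3. Perturbation: for |x| small, D(x) is close to the identity and every such
      vector keeps length > lam under g_2(x).
   4. Hence S_1(g_2(x)) consists of the +-v_k whose exponent d_k(x) is minimal.
      Well-roundedness forces all exponents to be minimal, hence equal, hence 0;
      and for x <> 0 the minimal exponent is negative, so l_v(g_2(tx)) =
      e^{t d_k(x)} lam tends to 0.  The main theorem assembles these facts. *)

From Stdlib Require Import Reals Lra Lia ZArith Arith List Classical.
Set Warnings "-notation-overridden -ambiguous-paths".
From mathcomp Require Import all_boot all_algebra.
From mathcomp Require Import Rstruct.
From Pilot Require Import Defs.
Open Scope R_scope.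

Definition mx (n : nat) (A : Mat) : 'M[R]_n := \matrix_(i < n, j < n) A i j.
Definition cv (n : nat) (y : Vec) : 'cV[R]_n := \col_(i < n) y i.

Lemma sumR_big n f : sumR n f = (\sum_(i < n) f i)%R.
Proof. by elim: n => [|n IH] /=; rewrite ?big_ord0 // big_ord_recr /= IH. Qed.

Lemma mx_mmul n A B : mx n (mmul n A B) = (mx n A *m mx n B)%R.
Proof. apply/matrixP=> i j; rewrite !mxE /mmul sumR_big; apply: eq_bigr => k _; by rewrite !mxE. Qed.

Lemma cv_matvec n A y : cv n (mat_vec n A y) = (mx n A *m cv n y)%R.
Proof. apply/matrixP=> i j; rewrite !mxE /mat_vec sumR_big; apply: eq_bigr => k _; by rewrite !mxE. Qed.

Lemma cv_eq n y z : cv n y = cv n z -> forall i, (i < n)%coq_nat -> y i = z i.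
Proof.
move=> E i /ltP Hi.
by have := congr1 (fun M : 'cV[R]_n => M (Ordinal Hi) ord0) E; rewrite !mxE.
Qed.

Lemma pow_expr (x : R) k : x ^ k = (x ^+ k)%R.
Proof. by elim: k => [|k IH] //=; rewrite GRing.exprS IH. Qed.

Lemma minor_mx n (i j : 'I_n) A :
  mx n.-1 (minor i j A) = row' i (col' j (mx n A)).
Proof.
have ltb_ltn a b : (a <? b)%nat = (a < b)%N.
  by case: (Nat.ltb_spec a b) => H; apply/esym; [apply/ltP|apply/negbTE/negP=>/ltP]; lia.
apply/matrixP=> r c; rewrite !mxE /minor !ltb_ltn /= /bump.
by case: (ltnP r i) => Hr; case: (ltnP c j) => Hc /=; rewrite ?add0n ?add1n.
Qed.

Lemma det_mx n A : det n A = (\det (mx n A))%R.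
Proof.
elim: n A => [|m IH] A; first by rewrite det_mx00.
have -> : det m.+1 A = sumR m.+1 (fun j => (-1) ^ j * A 0%nat j * det m (minor 0 j A)) by [].
rewrite (expand_det_row _ ord0) sumR_big; apply: eq_bigr => j _.
rewrite IH /matrix.cofactor -(minor_mx m.+1 ord0 j A) !mxE pow_expr /= add0n.
by rewrite GRing.mulrCA GRing.mulrA.
Qed.

Lemma unit_of_det n M : det n M <> 0 -> mx n M \in unitmx.
Proof. by move=> H; rewrite unitmxE GRing.unitfE -det_mx; apply/eqP. Qed.

Lemma inv_mx n B : det n B <> 0 -> mx n (inv n B) = invmx (mx n B).
Proof.
move=> H; rewrite /invmx unit_of_det //; apply/matrixP=> i j.
by rewrite !mxE /inv /Defs.cofactor det_mx Nat.sub_1_r [det n.-1 _]det_mx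
  (minor_mx n j i B) pow_expr /matrix.cofactor -plusE.
Qed.

Lemma indep_det m v : lin_indep m.+1 v -> det m.+1 (colmat v) <> 0.
Proof.
move=> Hi Hd; move/eqP: Hd; rewrite det_mx -det_tr => /det0P [w nz E].
pose c := fun k => if (k < m.+1)%N then w ord0 (inord k) else 0.
have Hc : forall k, (k < m.+1)%coq_nat -> c k = 0.
  apply: Hi => i /ltP Hi.
  have := congr1 (fun M : 'rV[R]_m.+1 => M ord0 (Ordinal Hi)) E.
  rewrite !mxE sumR_big => H; rewrite -[X in _ = X]H; apply: eq_bigr => k _.
  by rewrite !mxE /c ltn_ord inord_val.
case/eqP: nz; apply/matrixP=> i j; rewrite !mxE (ord1 i).
by have := Hc j (ltP (ltn_ord j)); rewrite /c ltn_ord inord_val.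
Qed.

Lemma sumR_ext n f g : (forall i, (i < n)%coq_nat -> f i = g i) -> sumR n f = sumR n g.
Proof.
elim: n => [|n IH] H //=; rewrite (H n); last lia.
by rewrite IH // => i Hi; apply: H; lia.
Qed.

Lemma sumR_delta n k f :
  (k < n)%coq_nat -> sumR n (fun j => if (j =? k)%nat then f j else 0) = f k.
Proof. by move=> /ltP Hk; rewrite sumR_big (bigD1 (Ordinal Hk)) //= Nat.eqb_refl big1
  ?GRing.addr0 // => j /eqP Hj; case: Nat.eqb_spec => // E; case: Hj; apply: val_inj. Qed.

Lemma sumR_le n f g : (forall i, (i < n)%coq_nat -> f i <= g i) -> sumR n f <= sumR n g.
Proof.
elim: n => [|n IH] H /=; first lra.
by have := H n ltac:(lia); have := IH ltac:(move=> i Hi; apply: H; lia); lra.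
Qed.

Lemma sumR_plus n f g : sumR n (fun i => f i + g i) = sumR n f + sumR n g.
Proof. elim: n => [|n IH] /=; first lra. rewrite IH; lra. Qed.

Lemma sumR_opp n f : sumR n (fun i => - f i) = - sumR n f.
Proof. elim: n => [|n IH] /=; first lra. rewrite IH; lra. Qed.

Lemma sumR_scal n c f : sumR n (fun i => c * f i) = c * sumR n f.
Proof. elim: n => [|n IH] /=; first lra. rewrite IH; lra. Qed.

Lemma sumR_const n c : sumR n (fun _ => c) = INR n * c.
Proof. elim: n => [|n IH]; first by rewrite /=; lra. rewrite S_INR /= IH; lra. Qed.

Lemma sumR_nonneg n f : (forall i, (i < n)%coq_nat -> 0 <= f i) -> 0 <= sumR n f.
Proof. by move=> H; rewrite -(Rmult_0_r (INR n)) -sumR_const; apply: sumR_le. Qed.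

Lemma sumR_term_le n f k :
  (forall i, (i < n)%coq_nat -> 0 <= f i) -> (k < n)%coq_nat -> f k <= sumR n f.
Proof.
elim: n => [|n IH] H Hk /=; first lia.
have H0 : 0 <= sumR n f by apply: sumR_nonneg => i Hi; apply: H; lia.
have := H n ltac:(lia); case: (Nat.eq_dec k n) => [->|Hne]; first lra.
have := IH ltac:(move=> i Hi; apply: H; lia) ltac:(lia); lra.
Qed.

Lemma sumR_abs n f : Rabs (sumR n f) <= sumR n (fun i => Rabs (f i)).
Proof.
elim: n => [|n IH] /=; first by rewrite Rabs_R0; lra.
have := Rabs_triang (sumR n f) (f n); lra.
Qed.

Lemma sumR_bound n a b beta : (forall k, (k < n)%coq_nat -> Rabs (b k) <= beta) ->
  Rabs (sumR n (fun k => a k * b k)) <= sumR n (fun k => Rabs (a k)) * beta.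
Proof.
move=> H; apply: Rle_trans (sumR_abs _ _) _.
rewrite Rmult_comm -sumR_scal; apply: sumR_le => k Hk.
rewrite Rabs_mult Rmult_comm; apply: Rmult_le_compat_r; [apply: Rabs_pos|exact: H].
Qed.

Lemma sq_nonneg (a : R) : 0 <= a ^ 2.
Proof. have := pow2_ge_0 a. lra. Qed.

Lemma vnorm_nonneg n z : 0 <= vnorm n z.
Proof. exact: sqrt_pos. Qed.

Lemma vnorm_sq n z : vnorm n z ^ 2 = sumR n (fun i => z i ^ 2).
Proof. by rewrite /vnorm /= Rmult_1_r sqrt_sqrt //; apply: sumR_nonneg => i _; apply: sq_nonneg. Qed.

Lemma vnorm_ext n y z : (forall i, (i < n)%coq_nat -> y i = z i) -> vnorm n y = vnorm n z.
Proof. by move=> H; rewrite /vnorm (sumR_ext _ _ (fun i => z i ^ 2)) // => i Hi; rewrite H. Qed.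

Lemma coord_le_vnorm n z k : (k < n)%coq_nat -> Rabs (z k) <= vnorm n z.
Proof.
move=> Hk; rewrite /vnorm -sqrt_Rsqr_abs; apply: sqrt_le_1_alt.
rewrite /Rsqr (_ : z k * z k = z k ^ 2); last by rewrite /=; lra.
by apply: (sumR_term_le n (fun i => z i ^ 2)) => // i _; apply: sq_nonneg.
Qed.

Lemma vnorm_scale n a z : vnorm n (fun i => a * z i) = Rabs a * vnorm n z.
Proof.
rewrite /vnorm (sumR_ext _ _ (fun i => a ^ 2 * z i ^ 2)); last by move=> i _; rewrite /=; ring.
rewrite sumR_scal sqrt_mult; [|apply: sq_nonneg|apply: sumR_nonneg => i _; apply: sq_nonneg].
by rewrite /= Rmult_1_r sqrt_Rsqr_abs.
Qed.

Lemma row_bound n P : exists C, 0 <= C /\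
  forall z k, (k < n)%coq_nat -> Rabs (mat_vec n P z k) <= C * vnorm n z.
Proof.
have Hrow : forall k, 0 <= sumR n (fun j => Rabs (P k j)).
  by move=> k; apply: sumR_nonneg => j _; apply: Rabs_pos.
exists (sumR n (fun k => sumR n (fun j => Rabs (P k j)))); split.
  by apply: sumR_nonneg.
move=> z k Hk; apply: Rle_trans (sumR_bound _ _ _ (vnorm n z) _) _.
  by move=> j Hj; exact: coord_le_vnorm.
apply: Rmult_le_compat_r; first exact: vnorm_nonneg.
exact: (sumR_term_le n (fun k => sumR n (fun j => Rabs (P k j)))).
Qed.

Lemma lv_nonneg n M u : 0 <= lv n M u.
Proof. exact: vnorm_nonneg. Qed.

Lemma lv_zeqv n M u w : zeqv n u w -> lv n M u = lv n M w.
Proof. by move=> H; apply: vnorm_ext => i _; apply: sumR_ext => j Hj; rewrite /toR H. Qed.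

Lemma lv_zopp n M u : lv n M (zopp u) = lv n M u.
Proof.
rewrite /lv (vnorm_ext _ _ (fun i => (-1) * mat_vec n M (toR u) i)).
  by rewrite vnorm_scale Rabs_Ropp Rabs_R1 Rmult_1_l.
move=> i _; rewrite /mat_vec -sumR_scal; apply: sumR_ext => j _.
by rewrite /toR /zopp opp_IZR; ring.
Qed.

(** * The flow g_2 in the basis of minimal vectors *)

Definition dk (n : nat) (x : Vec) (k : nat) : R :=
  if (k <? (n - 1)%coq_nat)%nat then x k else - sumR (n - 1)%coq_nat x.

Definition coords (n : nat) (v : nat -> ZVec) (y : Vec) : Vec :=
  mat_vec n (inv n (colmat v)) y.

Lemma Dmat_dk n x k j : Dmat n x k j = if (k =? j)%nat then exp (dk n x k) else 0.
Proof. by rewrite /Dmat /dk; case: (k =? j)%nat; case: (k <? (n - 1)%coq_nat)%nat. Qed.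

Lemma cv_diag n x y :
  cv n (fun k => exp (dk n x k) * y k) = (mx n (Dmat n x) *m cv n y)%R.
Proof.
apply/matrixP=> i j; rewrite !mxE.
rewrite -(sumR_delta n i (fun k => exp (dk n x i) * y k)); last exact/ltP.
rewrite sumR_big; apply: eq_bigr => k _; rewrite !mxE Dmat_dk.
case: (Nat.eqb_spec k i) => [->|H]; first by rewrite Nat.eqb_refl.
by case: (Nat.eqb_spec i k) => [E|_]; [case: H|rewrite GRing.mul0r].
Qed.

Definition idm : Mat := fun i j => if (j =? i)%nat then 1 else 0.

Lemma mat_vec_idm n y i : (i < n)%coq_nat -> mat_vec n idm y i = y i.
Proof.
move=> Hi; rewrite -(sumR_delta n i y) //; apply: sumR_ext => j _.
by rewrite /idm; case: Nat.eqb; ring.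
Qed.

Lemma factor_bound n M P : det n M <> 0 -> exists C, 0 <= C /\
  forall y k, (k < n)%coq_nat -> Rabs (mat_vec n P y k) <= C * vnorm n (mat_vec n M y).
Proof.
move=> HM; have [C [HC H]] := row_bound n (mmul n P (inv n M)).
exists C; split => // y k Hk.
suff -> : mat_vec n P y k = mat_vec n (mmul n P (inv n M)) (mat_vec n M y) k by exact: H.
move: k Hk; apply: cv_eq.
by rewrite !cv_matvec mx_mmul inv_mx // -mulmxA (mulmxA (invmx _)) mulVmx ?mul1mx ?unit_of_det.
Qed.

Section Flow.
Variables (n : nat) (A : Mat) (v : nat -> ZVec).
Hypothesis HB : det n (colmat v) <> 0.

Lemma g2_formula x y i : (i < n)%coq_nat ->
  mat_vec n (g2 n A v x) y i =
  sumR n (fun k => mmul n A (colmat v) i k * (exp (dk n x k) * coords n v y k)).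
Proof.
move: i; apply: cv_eq.
rewrite cv_matvec /g2 !mx_mmul inv_mx //.
have -> : cv n (fun i => sumR n (fun k => mmul n A (colmat v) i k * (exp (dk n x k) * coords n v y k)))
   = cv n (mat_vec n (mmul n A (colmat v)) (fun k => exp (dk n x k) * coords n v y k)) by [].
by rewrite cv_matvec cv_diag /coords cv_matvec inv_mx // mx_mmul !mulmxA.
Qed.

Lemma A_formula y i : (i < n)%coq_nat ->
  mat_vec n A y i = sumR n (fun k => mmul n A (colmat v) i k * coords n v y k).
Proof.
move: i; apply: cv_eq.
have -> : cv n (fun i => sumR n (fun k => mmul n A (colmat v) i k * coords n v y k))
   = cv n (mat_vec n (mmul n A (colmat v)) (coords n v y)) by [].
rewrite /coords !cv_matvec inv_mx // mx_mmul.
by rewrite -mulmxA (mulmxA (mx n (colmat v))) mulmxV ?mul1mx // unit_of_det.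
Qed.

Lemma coords_basis k j : (k < n)%coq_nat -> (j < n)%coq_nat ->
  coords n v (toR (v k)) j = if (j =? k)%nat then 1 else 0.
Proof.
move=> Hk; move: j; apply: cv_eq; rewrite /coords cv_matvec inv_mx //.
suff -> : cv n (toR (v k)) = (mx n (colmat v) *m cv n (fun j => if (j =? k)%nat then 1 else 0))%R.
  by rewrite mulKmx // unit_of_det.
apply/matrixP=> i j; rewrite !mxE /toR.
rewrite -(sumR_delta n k (fun l => IZR (v l i))) // sumR_big; apply: eq_bigr => l _.
by rewrite !mxE /colmat; case: (Nat.eqb_spec l k) => _; rewrite ?GRing.mulr1 ?GRing.mulr0.
Qed.

Lemma lv_g2_basis x k : (k < n)%coq_nat ->
  lv n (g2 n A v x) (v k) = exp (dk n x k) * lv n A (v k).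
Proof.
move=> Hk; rewrite /lv -(Rabs_right (exp (dk n x k))); last by left; apply: exp_pos.
rewrite -vnorm_scale; apply: vnorm_ext => i Hi.
rewrite g2_formula // A_formula // -sumR_scal; apply: sumR_ext => j Hj.
by rewrite coords_basis //; case: Nat.eqb_spec => [->|_]; ring.
Qed.

Lemma lv_g2_pm x k w : (k < n)%coq_nat ->
  zeqv n w (v k) \/ zeqv n w (zopp (v k)) ->
  lv n (g2 n A v x) w = exp (dk n x k) * lv n A (v k).
Proof. by move=> Hk [E|E]; rewrite (lv_zeqv _ _ _ _ E) ?lv_zopp; exact: lv_g2_basis. Qed.

End Flow.

Definition dk_minimal (n : nat) (x : Vec) (k : nat) : Prop :=
  forall j, (j < n)%coq_nat -> dk n x k <= dk n x j.

Lemma dk_lt m x k : (k < m)%coq_nat -> dk m.+1 x k = x k.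
Proof. by move=> Hk; rewrite /dk Nat.sub_succ Nat.sub_0_r; case: Nat.ltb_spec => //; lia. Qed.

Lemma dk_last m x : dk m.+1 x m = - sumR m x.
Proof. by rewrite /dk Nat.sub_succ Nat.sub_0_r; case: Nat.ltb_spec => //; lia. Qed.

Lemma sum_dk m x : sumR m.+1 (dk m.+1 x) = 0.
Proof. by rewrite /= dk_last (sumR_ext _ _ x) => [|i Hi]; [lra|rewrite dk_lt]. Qed.

Lemma dk_scale n t x k : dk n (vscale t x) k = t * dk n x k.
Proof. by rewrite /dk /vscale; case: Nat.ltb => //; rewrite sumR_scal; ring. Qed.

Lemma dk_bound n x k : (1 <= n)%coq_nat -> Rabs (dk n x k) <= INR n * vnorm (n - 1)%coq_nat x.
Proof.
move=> Hn; have Hv := vnorm_nonneg (n - 1)%coq_nat x.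
have Hn1 : 1 <= INR n by apply: (le_INR 1).
rewrite /dk; case: (Nat.ltb_spec k (n - 1)%coq_nat) => Hk.
  by apply: Rle_trans (coord_le_vnorm _ _ _ Hk) _; nra.
rewrite Rabs_Ropp; apply: Rle_trans (sumR_abs _ _) _.
apply: Rle_trans (_ : _ <= sumR (n - 1)%coq_nat (fun _ => vnorm (n - 1)%coq_nat x)) _.
  by apply: sumR_le => i Hi; exact: coord_le_vnorm.
by rewrite sumR_const; apply: Rmult_le_compat_r => //; apply: le_INR; lia.
Qed.

Lemma dk_minimal_nonpos m x k : dk_minimal m.+1 x k -> dk m.+1 x k <= 0.
Proof.
move=> H; have := sumR_le m.+1 (fun _ => dk m.+1 x k) _ H.
rewrite sum_dk sumR_const; have := pos_INR m; rewrite S_INR; nra.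
Qed.

Lemma dk_minimal_neg m x k : dk_minimal m.+1 x k ->
  (exists i, (i < m)%coq_nat /\ x i <> 0) -> dk m.+1 x k < 0.
Proof.
move=> H [i [Hi Hxi]]; case: (Rle_lt_or_eq_dec _ _ (dk_minimal_nonpos m x k H)) => // Hz.
have Hnn : forall j, (j < m.+1)%coq_nat -> 0 <= dk m.+1 x j by move=> j Hj; rewrite -Hz; exact: H.
have := sumR_term_le m.+1 (dk m.+1 x) i Hnn ltac:(lia).
by have := Hnn i ltac:(lia); rewrite sum_dk dk_lt //; lra.
Qed.

Lemma dk_const_zero m x : (forall j, (j < m.+1)%coq_nat -> dk_minimal m.+1 x j) ->
  forall i, (i < m)%coq_nat -> x i = 0.
Proof.
move=> Hall.
have Hxi : forall i, (i < m)%coq_nat -> x i = - sumR m x.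
  move=> i Hi; rewrite -(dk_lt m x i) // -dk_last.
  by apply: Rle_antisym; apply: Hall; lia.
have Hs : sumR m x = INR m * (- sumR m x) by rewrite -sumR_const; apply: sumR_ext.
have Hs0 : sumR m x = 0 by have := pos_INR m; nra.
by move=> i Hi; rewrite Hxi // Hs0; lra.
Qed.

Lemma dk_zero n x : (forall i, (i < (n - 1)%coq_nat)%coq_nat -> x i = 0) -> forall k, dk n x k = 0.
Proof.
move=> Hx k; rewrite /dk; case: Nat.ltb_spec => Hk; first exact: Hx.
by rewrite (sumR_ext _ _ (fun _ => 0)) // sumR_const; ring.
Qed.

(** * Discreteness of the lattice A Z^n *)

(* zbox N n enumerates (up to the meaningless coordinates) the integer vectors
   of Z^n whose coordinates lie in (-N, N). *)
Definition zrange (N : Z) : list Z :=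
  map (fun k => Z.sub (Z.of_nat k) N) (List.seq 0%nat (Z.to_nat (Z.mul 2 N))).

Definition upd (u : ZVec) (k : nat) (z : Z) : ZVec :=
  fun i => if (i =? k)%nat then z else u i.

Fixpoint zbox (N : Z) (n : nat) : list ZVec :=
  match n with
  | O => (fun _ => Z0) :: nil
  | S m => flat_map (fun u => map (upd u m) (zrange N)) (zbox N m)
  end.

Lemma zbox_spec N n u : (forall i, (i < n)%coq_nat -> Z.lt (Z.abs (u i)) N) ->
  exists w, In w (zbox N n) /\ zeqv n w u.
Proof.
elim: n u => [|n IH] u H; first by exists (fun _ => Z0); split; [left|move=> i Hi; lia].
have [w [Hw Hz]] := IH u ltac:(move=> i Hi; apply: H; lia).
exists (upd w n (u n)); split.
  apply/in_flat_map; exists w; split => //; apply/in_map_iff; exists (u n); split => //.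
  have := H n ltac:(lia) => Hun; apply/in_map_iff; exists (Z.to_nat (Z.add (u n) N)).
  by split; [lia|apply/List.in_seq; lia].
by move=> i Hi; rewrite /upd; case: Nat.eqb_spec => [->//|Hne]; apply: Hz; lia.
Qed.

Lemma list_min (P : ZVec -> Prop) (f : ZVec -> R) (lam : R) (L : list ZVec) :
  (forall u, P u -> lam < f u) ->
  exists m, lam < m /\ forall u, In u L -> P u -> m <= f u.
Proof.
move=> H; elim: L => [|a L [m [Hm HL]]]; first by exists (lam + 1); split; [lra|move=> u []].
case: (classic (P a)) => Pa; last by exists m; split => // u [<-|Hu] Pu //; exact: HL.
exists (Rmin m (f a)); split; first by apply: Rmin_glb_lt => //; apply: H.
move=> u [<-|Hu] Pu; first exact: Rmin_r.
exact: Rle_trans (Rmin_l _ _) (HL u Hu Pu).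
Qed.

Section Lattice.
Variables (n : nat) (A : Mat).
Hypothesis HA : det n A <> 0.

Lemma coord_bound : exists C, 0 <= C /\
  forall y i, (i < n)%coq_nat -> Rabs (y i) <= C * vnorm n (mat_vec n A y).
Proof.
have [C [HC H]] := factor_bound n A idm HA.
by exists C; split => // y i Hi; rewrite -(mat_vec_idm n y i Hi); apply: H.
Qed.

Lemma lv_pos u : nonzeroZ n u -> 0 < lv n A u.
Proof.
move=> [i [Hi Hui]]; have [C [HC H]] := coord_bound.
case: (Rle_lt_dec (lv n A u) 0) => // Hle; case: Hui; apply: eq_IZR.
have := H (toR u) i Hi; have := lv_nonneg n A u; rewrite /toR -/(lv n A u) => H0 Hb.
case: (Req_dec (IZR (u i)) 0) => // Hne; have := Rabs_pos_lt _ Hne; nra.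
Qed.

Lemma lattice_gap (P : ZVec -> Prop) lam :
  (forall u w, zeqv n w u -> P u -> P w) ->
  (forall u, P u -> lam < lv n A u) ->
  exists lam2, lam < lam2 /\ forall u, P u -> lam2 <= lv n A u.
Proof.
move=> HP Hlam; have [C [HC HCb]] := coord_bound.
set N := up (C * (lam + 1)).
have [m [Hm HL]] := list_min P (lv n A) lam (zbox N n) Hlam.
exists (Rmin (lam + 1) m); split; first by apply: Rmin_glb_lt; lra.
move=> u Hu; case: (Rle_lt_dec (lv n A u) (lam + 1)) => Hc; last first.
  by have := Rmin_l (lam + 1) m; lra.
have Hbox : forall i, (i < n)%coq_nat -> Z.lt (Z.abs (u i)) N.
  move=> i Hi; have := HCb (toR u) i Hi; rewrite /toR -/(lv n A u) => Hb.
  have Hb2 : Rabs (IZR (u i)) <= C * (lam + 1) by apply: Rle_trans Hb _; apply: Rmult_le_compat_l.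
  have [HN1 _] := archimed (C * (lam + 1)); rewrite -/N in HN1.
  by apply: lt_IZR; rewrite abs_IZR; lra.
have [w [Hw Hz]] := zbox_spec N n u Hbox.
rewrite -(lv_zeqv _ _ _ _ Hz); apply: Rle_trans (Rmin_r _ _) _.
by apply: HL => //; apply: HP Hu => i Hi; rewrite Hz.
Qed.

End Lattice.

(** * Small perturbations of the identity in D(x) *)

Lemma exp_bound d r : Rabs d <= r -> Rabs (exp d - 1) <= exp r - 1.
Proof.
move=> H; have Hmono a b : a <= b -> exp a <= exp b.
  by case/Rle_lt_or_eq_dec => [h|->]; [have := exp_increasing _ _ h; lra|lra].
case: (Rle_lt_dec 0 d) => Hd.
  have : exp 0 <= exp d by apply: Hmono.
  have : exp d <= exp r by apply: Hmono; move: H; rewrite Rabs_right; lra.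
  by rewrite exp_0 => ? ?; rewrite Rabs_right; lra.
have E1 : exp d < 1 by rewrite -exp_0; apply: exp_increasing.
have E : exp d * exp (- d) = 1 by rewrite -exp_plus Rplus_opp_r exp_0.
have : exp (- d) <= exp r by apply: Hmono; move: H; rewrite Rabs_left; lra.
by have := exp_pos d => ? ?; rewrite Rabs_left1; nra.
Qed.

Lemma exp_close n tau : (1 <= n)%coq_nat -> 0 < tau -> exists eps, eps > 0 /\
  forall x, vnorm (n - 1)%coq_nat x < eps -> forall k, Rabs (exp (dk n x k) - 1) <= tau.
Proof.
move=> Hn Htau; have Hn1 : 1 <= INR n by apply: (le_INR 1).
have Hln : 0 < ln (1 + tau) by rewrite -ln_1; apply: ln_increasing; lra.
exists (ln (1 + tau) / INR n); split; first by apply: Rdiv_lt_0_compat; lra.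
move=> x Hx k; have := exp_bound (dk n x k) (ln (1 + tau)).
rewrite exp_ln; last lra; move=> H; apply: Rle_trans (H _) _; last lra.
apply: Rle_trans (dk_bound n x k Hn) _.
have -> : ln (1 + tau) = INR n * (ln (1 + tau) / INR n) by field; lra.
by apply: Rmult_le_compat_l; lra.
Qed.

Lemma perturb_coord n (w e c : nat -> R) Ws gam mu :
  0 <= gam -> 0 <= mu <= 1 ->
  (forall k, (k < n)%coq_nat -> Rabs (c k) <= gam) ->
  (forall k, (k < n)%coq_nat -> Rabs (e k - 1) <= mu) ->
  sumR n (fun k => Rabs (w k)) <= Ws ->
  (sumR n (fun k => w k * c k)) ^ 2 - 3 * Ws ^ 2 * gam ^ 2 * mu <=
  (sumR n (fun k => w k * (e k * c k))) ^ 2.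
Proof.
move=> Hgam Hmu Hc He HWs.
set p := sumR n (fun k => w k * (e k * c k)); set q := sumR n (fun k => w k * c k).
have HW0 : 0 <= sumR n (fun k => Rabs (w k)) by apply: sumR_nonneg => k _; apply: Rabs_pos.
have B1 : Rabs (p - q) <= Ws * (mu * gam).
  have -> : p - q = sumR n (fun k => w k * ((e k - 1) * c k)).
    by rewrite /p /q /Rminus -sumR_opp -sumR_plus; apply: sumR_ext => k _; ring.
  apply: Rle_trans (sumR_bound _ _ _ (mu * gam) _) _.
    by move=> k Hk; rewrite Rabs_mult; apply: Rmult_le_compat; auto using Rabs_pos.
  by apply: Rmult_le_compat_r; [nra|].
have B2 : Rabs (p + q) <= Ws * (3 * gam).
  have -> : p + q = sumR n (fun k => w k * ((e k + 1) * c k)).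
    by rewrite /p /q -sumR_plus; apply: sumR_ext => k _; ring.
  apply: Rle_trans (sumR_bound _ _ _ (3 * gam) _) _; last by apply: Rmult_le_compat_r; lra.
  move=> k Hk; rewrite Rabs_mult; apply: Rmult_le_compat; auto using Rabs_pos.
  have := He k Hk; have := Rabs_triang (e k - 1) 2; rewrite (Rabs_right 2); last lra.
  by rewrite (_ : e k - 1 + 2 = e k + 1); [lra|ring].
have : Rabs ((p - q) * (p + q)) <= (Ws * (mu * gam)) * (Ws * (3 * gam)).
  by rewrite Rabs_mult; apply: Rmult_le_compat; auto using Rabs_pos.
have := Rle_abs (- ((p - q) * (p + q))); rewrite Rabs_Ropp; nra.
Qed.

Section Perturbation.
Variables (n : nat) (A : Mat) (v : nat -> ZVec).
Hypotheses (HA : det n A <> 0) (HB : det n (colmat v) <> 0).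

Lemma g2_lower : exists K, 0 <= K /\ forall x u tau, 0 <= tau <= 1 ->
  (forall k, (k < n)%coq_nat -> Rabs (exp (dk n x k) - 1) <= tau) ->
  (1 - K * tau) * lv n A u ^ 2 <= lv n (g2 n A v x) u ^ 2.
Proof.
have [Cc [HCc Hcoord]] := factor_bound n A (inv n (colmat v)) HA.
set W := mmul n A (colmat v).
set Ws := sumR n (fun i => sumR n (fun k => Rabs (W i k))).
have HWs : forall i, (i < n)%coq_nat -> sumR n (fun k => Rabs (W i k)) <= Ws.
  move=> i Hi; apply: (sumR_term_le n (fun i => sumR n (fun k => Rabs (W i k)))) => // j _.
  by apply: sumR_nonneg => k _; apply: Rabs_pos.
exists (3 * INR n * Ws ^ 2 * Cc ^ 2); split.
  by have := pos_INR n; have := sq_nonneg Ws; have := sq_nonneg Cc; move=> *;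
     repeat apply: Rmult_le_pos => //; lra.
move=> x u tau Htau He; set L := lv n A u.
have HL := lv_nonneg n A u.
have Hc : forall k, (k < n)%coq_nat -> Rabs (coords n v (toR u) k) <= Cc * L by move=> k Hk; exact: Hcoord.
rewrite /lv !vnorm_sq -/(lv n A u) -/L.
have -> : (1 - 3 * INR n * Ws ^ 2 * Cc ^ 2 * tau) * sumR n (fun i => mat_vec n A (toR u) i ^ 2)
  = sumR n (fun i => mat_vec n A (toR u) i ^ 2 - 3 * Ws ^ 2 * (Cc * L) ^ 2 * tau).
  rewrite /Rminus sumR_plus sumR_const -vnorm_sq -/(lv n A u) -/L; ring.
apply: sumR_le => i Hi; rewrite (g2_formula n A v HB) // (A_formula n A v HB) //.
by apply: perturb_coord; auto; apply: Rmult_le_pos.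
Qed.

(* Vectors uniformly longer than lam under A stay longer than lam under
   g_2(x) for x small (discreteness gives the uniform margin). *)
Lemma stable_lower_bound (P : ZVec -> Prop) lam : (1 <= n)%coq_nat -> 0 <= lam ->
  (forall u w, zeqv n w u -> P u -> P w) ->
  (forall u, P u -> lam < lv n A u) ->
  exists eps, eps > 0 /\ forall x, vnorm (n - 1)%coq_nat x < eps ->
    forall u, P u -> lam < lv n (g2 n A v x) u.
Proof.
move=> Hn Hlam HP Hlong.
have [lam2 [Hl2 Hgap]] := lattice_gap n A HA P lam HP Hlong.
have [K [HK Hlow]] := g2_lower.
set r := lam / lam2.
have Hlam2 : lam = r * lam2 by rewrite /r; field; lra.
have Hr : 0 <= r < 1 by nra.
set tau := Rmin 1 ((1 - r ^ 2) / (2 * (K + 1))).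
have Htau : 0 < tau <= 1.
  split; last exact: Rmin_l.
  by apply: Rmin_glb_lt; [lra|apply: Rdiv_lt_0_compat; nra].
have HKtau : K * tau <= (1 - r ^ 2) / 2.
  apply: Rle_trans (_ : _ <= (K + 1) * ((1 - r ^ 2) / (2 * (K + 1)))) _; last by right; field; lra.
  by apply: Rmult_le_compat; try lra; apply: Rmin_r.
have [eps [Heps Hclose]] := exp_close n tau Hn ltac:(lra).
exists eps; split => // x Hx u Hu.
have H2 := Hlow x u tau ltac:(lra) (fun k _ => Hclose x Hx k).
have HL : lam2 <= lv n A u := Hgap u Hu.
have := lv_nonneg n (g2 n A v x) u; have : lam2 ^ 2 <= lv n A u ^ 2 by apply: pow_incr; lra.
nra.
Qed.

End Perturbation.

(** * Minimal vectors of g_2(x) *)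

Definition off_basis (n : nat) (v : nat -> ZVec) (u : ZVec) : Prop :=
  nonzeroZ n u /\ forall k, (k < n)%coq_nat -> ~ zeqv n u (v k) /\ ~ zeqv n u (zopp (v k)).

Lemma off_basis_zeqv n v u w : zeqv n w u -> off_basis n v u -> off_basis n v w.
Proof.
move=> E [[i [Hi Hu]] Hk]; split; first by exists i; split => //; rewrite E.
move=> k Hk'; have [H1 H2] := Hk k Hk'.
by split => H; [apply: H1|apply: H2] => j Hj; rewrite -E //; exact: H.
Qed.

Lemma not_off_basis n v u : nonzeroZ n u -> ~ off_basis n v u ->
  exists k, (k < n)%coq_nat /\ (zeqv n u (v k) \/ zeqv n u (zopp (v k))).
Proof.
move=> Hu Hg; apply: NNPP => Hn; apply: Hg; split => // k Hk.
by split => H; apply: Hn; exists k; tauto.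
Qed.

Lemma not_S1_longer n M w u : in_S1 n M w -> nonzeroZ n u -> ~ in_S1 n M u ->
  lv n M w < lv n M u.
Proof.
move=> [_ Hw] Hu Hns; apply: Rnot_le_lt => Hle; apply: Hns; split => // u' Hu'.
exact: Rle_trans Hle (Hw u' Hu').
Qed.

Lemma pm_scalar n w (u : ZVec) : zeqv n w u \/ zeqv n w (zopp u) ->
  exists s, forall i, (i < n)%coq_nat -> IZR (w i) = s * IZR (u i).
Proof.
case=> E; [exists 1|exists (-1)] => i Hi; rewrite E //; last rewrite /zopp opp_IZR; ring.
Qed.

Lemma span_coeffs n v (Q : nat -> Prop) (l : list (R * ZVec)) :
  Forall (fun p => exists k, (k < n)%coq_nat /\
    (zeqv n (snd p) (v k) \/ zeqv n (snd p) (zopp (v k))) /\ Q k) l ->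
  exists c : nat -> R, (forall k, (k < n)%coq_nat -> c k <> 0 -> Q k) /\
    forall i, (i < n)%coq_nat ->
      fold_right (fun p acc => fst p * IZR (snd p i) + acc) 0 l = sumR n (fun k => c k * IZR (v k i)).
Proof.
elim: l => [|[a w] l IH] HF.
  exists (fun _ => 0); split; first by move=> k _ H; lra.
  by move=> i _ /=; rewrite (sumR_ext _ _ (fun _ => 0)) ?sumR_const; [ring|move=> *; ring].
inversion HF as [|p l' [k [Hk [Hpm HQ]]] HF']; subst.
have [c [Hc Hs]] := IH HF'; have [s Hws] := pm_scalar n w (v k) Hpm.
exists (fun j => c j + (if (j =? k)%nat then s * a else 0)); split.
  move=> j Hj; case: (Nat.eqb_spec j k) => [->//|_] Hne.
  by apply: Hc => //; rewrite Rplus_0_r in Hne.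
move=> i Hi; rewrite /= Hs // Hws //.
rewrite [RHS](sumR_ext _ _ (fun j => c j * IZR (v j i) + (if (j =? k)%nat then s * a * IZR (v j i) else 0))).
  by rewrite sumR_plus sumR_delta //; ring.
by move=> j _; case: Nat.eqb; ring.
Qed.

Lemma well_rounded_all_indices n M v (Q : nat -> Prop) :
  lin_indep n v -> well_rounded n M ->
  (forall w, in_S1 n M w -> exists k, (k < n)%coq_nat /\
      (zeqv n w (v k) \/ zeqv n w (zopp (v k))) /\ Q k) ->
  forall j, (j < n)%coq_nat -> Q j.
Proof.
move=> Hindep HW HS j Hj.
have [l [Hl Hy]] := HW (toR (v j)).
have [c [Hc Hs]] := span_coeffs n v Q l (Forall_impl _ (fun p Hp => HS _ Hp) Hl).
apply: Hc => // Hcj.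
have Hz : forall i, (i < n)%coq_nat ->
    sumR n (fun k => (c k - (if (k =? j)%nat then 1 else 0)) * IZR (v k i)) = 0.
  move=> i Hi.
  rewrite (sumR_ext _ _ (fun k => c k * IZR (v k i) + - (if (k =? j)%nat then IZR (v k i) else 0))).
    by rewrite sumR_plus sumR_opp sumR_delta // -Hs // -Hy //; rewrite /toR; ring.
  by move=> k _; case: Nat.eqb; ring.
by have := Hindep _ Hz j Hj; rewrite Nat.eqb_refl Hcj; lra.
Qed.

Lemma well_rounded_lv n M N : (forall u, lv n M u = lv n N u) ->
  well_rounded n M -> well_rounded n N.
Proof.
move=> E HW y; have [l [Hl Hy]] := HW y; exists l; split => //.
by apply: Forall_impl Hl => p [Hp1 Hp2]; split => // u Hu; rewrite -!E; exact: Hp2.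
Qed.

Lemma min_index n (f : nat -> R) : (0 < n)%coq_nat ->
  exists k, (k < n)%coq_nat /\ forall j, (j < n)%coq_nat -> f k <= f j.
Proof.
elim: n => [|n IH] H; first lia.
case: (Nat.eq_dec n 0) => [->|Hn].
  by exists 0%nat; split => [|j Hj]; [lia|have -> : j = 0%nat by lia]; lra.
have [k [Hk Hm]] := IH ltac:(lia).
case: (Rle_lt_dec (f k) (f n)) => Hc; [exists k|exists n]; split; try lia;
  move=> j Hj; case: (Nat.eq_dec j n) => [->|?]; try lra; have := Hm j ltac:(lia); lra.
Qed.

Section Rigidity.
Variables (m : nat) (A : Mat) (v : nat -> ZVec) (lam : R).
Hypotheses (HB : det m.+1 (colmat v) <> 0) (Hlam0 : 0 < lam).
Hypothesis Hlam : forall k, (k < m.+1)%coq_nat -> lv m.+1 A (v k) = lam.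
Hypothesis Hnz : forall k, (k < m.+1)%coq_nat -> nonzeroZ m.+1 (v k).

Lemma S1_g2_minimal x : (forall u, off_basis m.+1 v u -> lam < lv m.+1 (g2 m.+1 A v x) u) ->
  forall w, in_S1 m.+1 (g2 m.+1 A v x) w -> exists k, (k < m.+1)%coq_nat /\
    (zeqv m.+1 w (v k) \/ zeqv m.+1 w (zopp (v k))) /\ dk_minimal m.+1 x k.
Proof.
move=> Hlong w [Hwnz Hwmin].
have Hbasis k : (k < m.+1)%coq_nat -> lv m.+1 (g2 m.+1 A v x) (v k) = exp (dk m.+1 x k) * lam.
  by move=> Hk; rewrite lv_g2_basis // Hlam.
have [kmin [Hkmin Hmin]] := min_index m.+1 (dk m.+1 x) ltac:(lia).
have Hw_le : lv m.+1 (g2 m.+1 A v x) w <= lam.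
  apply: Rle_trans (Hwmin (v kmin) (Hnz kmin Hkmin)) _; rewrite Hbasis //.
  have : exp (dk m.+1 x kmin) <= exp 0.
    by case: (Rle_lt_or_eq_dec _ _ (dk_minimal_nonpos m x kmin Hmin)) => [/exp_increasing|->]; lra.
  by rewrite exp_0; nra.
case: (classic (off_basis m.+1 v w)) => Hg; first by have := Hlong w Hg; lra.
have [k [Hk Hpm]] := not_off_basis m.+1 v w Hwnz Hg.
exists k; split => //; split => // j Hj.
have := Hwmin (v j) (Hnz j Hj); rewrite (lv_g2_pm m.+1 A v HB x k w Hk Hpm) Hlam // Hbasis //.
case: (Rle_lt_dec (dk m.+1 x k) (dk m.+1 x j)) => // /exp_increasing; nra.
Qed.

End Rigidity.

Lemma g2_at_zero n A v x : det n (colmat v) <> 0 ->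
  (forall i, (i < (n - 1)%coq_nat)%coq_nat -> x i = 0) ->
  forall u, lv n (g2 n A v x) u = lv n A u.
Proof.
move=> HB Hx u; apply: vnorm_ext => i Hi.
rewrite g2_formula // (A_formula n A v) //; apply: sumR_ext => k _.
by rewrite dk_zero // exp_0; ring.
Qed.

Lemma exp_decay d c e : d < 0 -> 0 < c -> 0 < e ->
  exists T, forall t, t > T -> exp (t * d) * c < e.
Proof.
move=> Hd Hc He; have Hec : 0 < e / c by apply: Rdiv_lt_0_compat.
exists (ln (e / c) / d) => t Ht.
have Htd : t * d < ln (e / c).
  have -> : ln (e / c) = ln (e / c) / d * d by field; lra.
  nra.
have := exp_increasing _ _ Htd; rewrite exp_ln // => H.
have -> : e = e / c * c by field; lra.
by apply: Rmult_lt_compat_r.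
Qed.

Theorem mainTheorem12 (n : nat) (Hn : (2 <= n)%coq_nat) (A : Mat) (v : nat -> ZVec)
  (HA_SL : det n A = 1)
  (HA_X : well_rounded n A)
  (Hindep : lin_indep n v)
  (HS1 : forall w : ZVec, in_S1 n A w <->
          exists k, (k < n)%coq_nat /\ (zeqv n w (v k) \/ zeqv n w (zopp (v k)))) :
  exists eps : R, eps > 0 /\
    forall x : Vec, vnorm (n - 1)%coq_nat x < eps ->
      (well_rounded n (g2 n A v x) <-> (forall i, (i < (n - 1)%coq_nat)%coq_nat -> x i = 0)) /\
      ((exists i, (i < (n - 1)%coq_nat)%coq_nat /\ x i <> 0) ->
        forall w : ZVec, in_S1 n (g2 n A v x) w ->
          forall e : R, e > 0 -> exists T : R, forall t : R, t > T ->
            Rabs (lv n (g2 n A v (vscale t x)) w) < e).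
Proof.
destruct n as [|m]; first lia.
have HB := indep_det m v Hindep.
have HA : det m.+1 A <> 0 by rewrite HA_SL; lra.
have Hvk k : (k < m.+1)%coq_nat -> in_S1 m.+1 A (v k).
  by move=> Hk; apply/HS1; exists k; split; [|left].
set lam := lv m.+1 A (v 0%nat).
have Hlam k : (k < m.+1)%coq_nat -> lv m.+1 A (v k) = lam.
  move=> Hk; have [Hk1 Hk2] := Hvk k Hk; have [H01 H02] := Hvk 0%nat ltac:(lia).
  by have := Hk2 _ H01; have := H02 _ Hk1; rewrite /lam; lra.
have Hnz k : (k < m.+1)%coq_nat -> nonzeroZ m.+1 (v k) by case/Hvk.
have Hlam0 : 0 < lam := lv_pos m.+1 A HA _ (Hnz 0%nat ltac:(lia)).
have Hlong u : off_basis m.+1 v u -> lam < lv m.+1 A u.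
  move=> [Hu Hnot]; apply: not_S1_longer (Hvk 0%nat ltac:(lia)) Hu _.
  by move/HS1 => [k [Hk [E|E]]]; case: (Hnot k Hk).
have [eps [Heps Hstable]] := stable_lower_bound m.+1 A v HA HB (off_basis m.+1 v) lam
  ltac:(lia) ltac:(lra) (off_basis_zeqv m.+1 v) Hlong.
exists eps; split => // x Hx.
have Hmin := S1_g2_minimal m A v lam HB Hlam0 Hlam Hnz x (Hstable x Hx).
rewrite Nat.sub_succ Nat.sub_0_r; split; first split.
- move=> HW; apply: dk_const_zero; apply: well_rounded_all_indices Hindep HW Hmin.
- move=> Hx0; apply: well_rounded_lv HA_X => u.
  by rewrite g2_at_zero // Nat.sub_succ Nat.sub_0_r.
- move=> Hxnz w Hw e He; have [k [Hk [Hpm Hkmin]]] := Hmin w Hw.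
  have [T HT] := exp_decay _ _ _ (dk_minimal_neg m x k Hkmin Hxnz) Hlam0 He.
  exists T => t Ht; rewrite (lv_g2_pm m.+1 A v HB _ k w Hk Hpm) dk_scale Hlam //.
  by rewrite Rabs_right; [exact: HT|have := exp_pos (t * dk m.+1 x k); nra].
Qed.
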